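(* Every pre-Hilbert $*$-category $\mathcal{C}$ is uniquely a $\mathbb{Q}$-linear category, that is, there is a unique way to equip each hom-set of $\mathcal{C}$ with the structure of a $\mathbb{Q}$-vector space (extending its abelian group structure) such that composition is bilinear. Additionally, $(fq)^* = f^* q$ for all morphisms $f$ and all $q\in\mathbb{Q}$.
   Context: A $*$-category is a category with a choice of $f^*\colon Y\to X$ for each $f\colon X\to Y$ such that $1^*=1$, $(gf)^*=f^*g^*$, $(f^* )^*=f$. A pre-Hilbert $*$-category is a $*$-category with (R1) a zero object, (R2) orthonormal biproducts of all pairs of objects (biproducts $(X,s_1,r_1,s_2,r_2)$ with $r_k=s_k^*$), (R3) an isometric kernel (kernel $m$ with $m^*m=1$) for every morphism, and (R4) every diagonal $\Delta\colon X\to X\oplus X$ a kernel of some morphism. Such a category is additive, hence uniquely enriched in abelian groups via its biproducts. *)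

From mathcomp Require Import all_boot all_order all_algebra.
Set Implicit Arguments. Unset Strict Implicit. Unset Printing Implicit Defensive.
Import GRing.Theory.
Local Open Scope ring_scope.

Record Category := {
  Ob :> Type;
  Mor : Ob -> Ob -> Type;
  comp : forall X Y Z : Ob, Mor Y Z -> Mor X Y -> Mor X Z;
  idm : forall X : Ob, Mor X X;
  comp_assoc : forall (W X Y Z : Ob) (h : Mor Y Z) (g : Mor X Y) (f : Mor W X),
      comp h (comp g f) = comp (comp h g) f;
  comp_idl : forall (X Y : Ob) (f : Mor X Y), comp (idm Y) f = f;
  comp_idr : forall (X Y : Ob) (f : Mor X Y), comp f (idm X) = f }.
Arguments comp {c X Y Z} g f.
Arguments idm {c} X.
Arguments Mor {c} X Y.

Record StarCategory := {
  cat :> Category;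
  star : forall X Y : cat, Mor X Y -> Mor Y X;
  star_id : forall X : cat, star (idm X) = idm X;
  star_comp : forall (X Y Z : cat) (g : Mor Y Z) (f : Mor X Y),
      star (comp g f) = comp (star f) (star g);
  star_invol : forall (X Y : cat) (f : Mor X Y), star (star f) = f }.
Arguments star {s X Y} f.

Section Defs.
Variable C : Category.

Definition is_zero_obj (Z : C) : Prop :=
  forall X : C, (exists f : Mor X Z, forall g, g = f) /\
                (exists f : Mor Z X, forall g, g = f).

Definition is_zero_mor (X Y : C) (f : Mor X Y) : Prop :=
  exists (Z : C) (a : Mor X Z) (b : Mor Z Y), is_zero_obj Z /\ f = comp b a.

Definition is_biproduct (X1 X2 B : C) (s1 : Mor X1 B) (r1 : Mor B X1)
    (s2 : Mor X2 B) (r2 : Mor B X2) : Prop :=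
  [/\ comp r1 s1 = idm X1 /\ comp r2 s2 = idm X2,
      is_zero_mor (comp r2 s1) /\ is_zero_mor (comp r1 s2),
      (forall (W : C) (f1 : Mor W X1) (f2 : Mor W X2),
          exists! h : Mor W B, comp r1 h = f1 /\ comp r2 h = f2) &
      (forall (W : C) (g1 : Mor X1 W) (g2 : Mor X2 W),
          exists! h : Mor B W, comp h s1 = g1 /\ comp h s2 = g2)].

Definition is_kernel (X Y K : C) (f : Mor X Y) (m : Mor K X) : Prop :=
  is_zero_mor (comp f m) /\
  forall (W : C) (g : Mor W X), is_zero_mor (comp f g) ->
    exists! h : Mor W K, comp m h = g.

(* the abelian-group addition on hom-sets induced by biproducts:
   h = f + g  iff  h = [1,1] o <f,g> for some biproduct Y (+) Y *)
Definition hom_sum (X Y : C) (f g h : Mor X Y) : Prop :=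
  exists (B : C) (s1 r1 s2 r2 : Mor _ _) (p : Mor X B) (c : Mor B Y),
    @is_biproduct Y Y B s1 r1 s2 r2 /\
    comp r1 p = f /\ comp r2 p = g /\
    comp c s1 = idm Y /\ comp c s2 = idm Y /\ h = comp c p.

Definition QAction := forall X Y : C, rat -> Mor X Y -> Mor X Y.

Definition is_Qlinear (sc : QAction) : Prop :=
  [/\ (forall (X Y : C) (f : Mor X Y), sc X Y 1 f = f) /\
      (forall (X Y : C) (a b : rat) (f : Mor X Y),
          sc X Y (a * b) f = sc X Y a (sc X Y b f)),
      (forall (X Y : C) (a b : rat) (f : Mor X Y),
          hom_sum (sc X Y a f) (sc X Y b f) (sc X Y (a + b) f)),
      (forall (X Y : C) (a : rat) (f g h : Mor X Y),
          hom_sum f g h -> hom_sum (sc X Y a f) (sc X Y a g) (sc X Y a h)),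
      (forall (X Y Z : C) (g : Mor Y Z) (f f' h : Mor X Y),
          hom_sum f f' h -> hom_sum (comp g f) (comp g f') (comp g h)) /\
      (forall (X Y Z : C) (g g' h : Mor Y Z) (f : Mor X Y),
          hom_sum g g' h -> hom_sum (comp g f) (comp g' f) (comp h f)) &
      (forall (X Y Z : C) (a : rat) (g : Mor Y Z) (f : Mor X Y),
          sc X Z a (comp g f) = comp (sc Y Z a g) f /\
          sc X Z a (comp g f) = comp g (sc X Y a f))].

End Defs.

Definition is_preHilbert (C : StarCategory) : Prop :=
  [/\ (exists Z : C, is_zero_obj Z),
      (forall X Y : C, exists (B : C) (s1 : Mor X B) (s2 : Mor Y B),
          is_biproduct s1 (star s1) s2 (star s2)),
      (forall (X Y : C) (f : Mor X Y), exists (K : C) (m : Mor K X),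
          is_kernel f m /\ comp (star m) m = idm K) &
      (forall (X B : C) (s1 s2 : Mor X B),
          is_biproduct s1 (star s1) s2 (star s2) ->
          forall d : Mor X B, comp (star s1) d = idm X -> comp (star s2) d = idm X ->
          exists (Y : C) (f : Mor B Y), is_kernel f d)].

(* Biproducts make every hom-set a commutative monoid (Eckmann-Hilton), with
   composition and [star] additive.  The kernel axioms make it a group: if
   [bpair p q] is an isometric kernel of the codiagonal [star D], then
   [p + q = 0] and [star p ∘ (p + p) = 1], and since the diagonal [D] is
   itself a kernel, also [(p + p) ∘ star p = 1]; so [(q + q) ∘ star p] is a
   negative of the identity.  The same argument with the graph of [a] in place
   of [D] shows that [1 + a ∘ star a] is invertible; as [n] has the form
   [star a ∘ a], every [n + 1] is invertible and [q] acts by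
   [numq q ∘ (denq q)^-1].  Any rational action, as well as composition and
   [star], commutes with integer multiples, and a morphism is determined by any
   positive multiple of it: this gives uniqueness and [star (q f) = q (star f)]. *)

From Pilot Require Import Defs.
From mathcomp Require Import ssreflect ssrfun ssrbool rat.
From HB Require Import structures.
From mathcomp Require Import all_boot all_algebra boolp.
Set Implicit Arguments. Unset Strict Implicit. Unset Printing Implicit Defensive.
Import GRing.Theory Num.Theory.
Local Open Scope ring_scope.

Local Notation "g ∘ f" := (Defs.comp g f) (at level 40, left associativity).
Local Notation compA := Defs.comp_assoc.

Section ZeroObject.
Variables (C : Category) (O : C).
Hypothesis O_zero : is_zero_obj O.

Definition to_zero (X : C) : Mor X O := sval (cid (proj1 (O_zero X))).
Definition from_zero (X : C) : Mor O X := sval (cid (proj2 (O_zero X))).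

Lemma to_zero_unique X (f : Mor X O) : f = to_zero X.
Proof. exact: proj2_sig (cid (proj1 (O_zero X))) f. Qed.

Lemma from_zero_unique X (f : Mor O X) : f = from_zero X.
Proof. exact: proj2_sig (cid (proj2 (O_zero X))) f. Qed.

Fact zmor_key : unit. Proof. exact: tt. Qed.
Definition zmor (X Y : C) : Mor X Y := locked_with zmor_key (from_zero Y ∘ to_zero X).

Lemma zmorE X Y : zmor X Y = from_zero Y ∘ to_zero X.
Proof. by rewrite /zmor unlock. Qed.

Lemma comp_through_zero X Y (a : Mor X O) (b : Mor O Y) : b ∘ a = zmor X Y.
Proof. by rewrite zmorE (to_zero_unique a) (from_zero_unique b). Qed.

Lemma zmor_compl X Y Z (f : Mor X Y) : zmor Y Z ∘ f = zmor X Z.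
Proof. by rewrite zmorE -compA comp_through_zero. Qed.

Lemma zmor_compr X Y Z (f : Mor Y Z) : f ∘ zmor X Y = zmor X Z.
Proof. by rewrite zmorE compA comp_through_zero. Qed.

Lemma is_zero_morP X Y (f : Mor X Y) : is_zero_mor f <-> f = zmor X Y.
Proof.
split=> [[Z [a [b [Z_zero ->]]]] | ->]; last first.
  by exists O, (to_zero X), (from_zero Y); rewrite zmorE.
have [[a0 a0_unique] _] := Z_zero X.
rewrite (a0_unique a) -(a0_unique (from_zero Z ∘ to_zero X)).
by rewrite compA comp_through_zero.
Qed.

End ZeroObject.

Section Biproduct.
Variables (C : Category) (O : C) (O_zero : is_zero_obj O).
Variables (X1 X2 B : C) (s1 : Mor X1 B) (r1 : Mor B X1) (s2 : Mor X2 B) (r2 : Mor B X2).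
Hypothesis B_biprod : is_biproduct s1 r1 s2 r2.

Lemma biprod_r1s1 : r1 ∘ s1 = idm X1. Proof. by case: B_biprod => [[]]. Qed.
Lemma biprod_r2s2 : r2 ∘ s2 = idm X2. Proof. by case: B_biprod => [[]]. Qed.
Lemma biprod_r2s1 : r2 ∘ s1 = zmor O_zero X1 X2.
Proof. by case: B_biprod => _ [/is_zero_morP]. Qed.
Lemma biprod_r1s2 : r1 ∘ s2 = zmor O_zero X2 X1.
Proof. by case: B_biprod => _ [_ /is_zero_morP]. Qed.

Lemma biprod_pair W (f1 : Mor W X1) (f2 : Mor W X2) :
  exists h, r1 ∘ h = f1 /\ r2 ∘ h = f2.
Proof. by case: B_biprod => _ _ /(_ W f1 f2) [h []]; exists h. Qed.

Lemma biprod_copair W (g1 : Mor X1 W) (g2 : Mor X2 W) :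
  exists h, h ∘ s1 = g1 /\ h ∘ s2 = g2.
Proof. by case: B_biprod => _ _ _ /(_ W g1 g2) [h []]; exists h. Qed.

Lemma biprod_proj_inj W (h h' : Mor W B) :
  r1 ∘ h = r1 ∘ h' -> r2 ∘ h = r2 ∘ h' -> h = h'.
Proof.
case: B_biprod => _ _ /(_ W (r1 ∘ h) (r2 ∘ h)) [h0 [_ h0_unique]] _ e1 e2.
by rewrite -(h0_unique h) // -(h0_unique h') // e1 e2.
Qed.

Lemma biprod_inj_inj W (h h' : Mor B W) :
  h ∘ s1 = h' ∘ s1 -> h ∘ s2 = h' ∘ s2 -> h = h'.
Proof.
case: B_biprod => _ _ _ /(_ W (h ∘ s1) (h ∘ s2)) [h0 [_ h0_unique]] e1 e2.
by rewrite -(h0_unique h) // -(h0_unique h') // e1 e2.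
Qed.

End Biproduct.

(* The sum [c ∘ p] does not depend on the biproduct: the comparison map [phi]
   carries [s_k] to [s_k'] and [p] to [p']. *)
Lemma biprod_sum_unique (C : Category) (O : C) (O_zero : is_zero_obj O)
    (Y B B' : C) (s1 r1 s2 r2 : Mor _ _) (s1' r1' s2' r2' : Mor _ _)
    (X : C) (p : Mor X B) (c : Mor B Y) (p' : Mor X B') (c' : Mor B' Y) :
  is_biproduct s1 r1 s2 r2 -> is_biproduct s1' r1' s2' r2' ->
  r1 ∘ p = r1' ∘ p' -> r2 ∘ p = r2' ∘ p' ->
  c ∘ s1 = idm Y -> c ∘ s2 = idm Y -> c' ∘ s1' = idm Y -> c' ∘ s2' = idm Y ->
  c ∘ p = c' ∘ p'.
Proof.
move=> B_biprod B'_biprod e1 e2 c1 c2 c1' c2'.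
have [phi [phi1 phi2]] := biprod_pair B'_biprod r1 r2.
have phi_s1 : phi ∘ s1 = s1'.
  apply: (biprod_proj_inj B'_biprod); rewrite compA ?phi1 ?phi2.
    by rewrite (biprod_r1s1 B_biprod) (biprod_r1s1 B'_biprod).
  by rewrite (biprod_r2s1 O_zero B_biprod) (biprod_r2s1 O_zero B'_biprod).
have phi_s2 : phi ∘ s2 = s2'.
  apply: (biprod_proj_inj B'_biprod); rewrite compA ?phi1 ?phi2.
    by rewrite (biprod_r1s2 O_zero B_biprod) (biprod_r1s2 O_zero B'_biprod).
  by rewrite (biprod_r2s2 B_biprod) (biprod_r2s2 B'_biprod).
have phi_p : phi ∘ p = p'.
  by apply: (biprod_proj_inj B'_biprod); rewrite compA ?phi1 ?phi2.
have c'_phi : c' ∘ phi = c.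
  by apply: (biprod_inj_inj B_biprod); rewrite -compA ?phi_s1 ?phi_s2 ?c1 ?c2.
by rewrite -c'_phi -compA phi_p.
Qed.

Section Semiadditive.
Variables (C : Category) (O : C) (O_zero : is_zero_obj O) (bsum : C -> C -> C).
Variables (inj1 : forall X Y : C, Mor X (bsum X Y)) (inj2 : forall X Y : C, Mor Y (bsum X Y)).
Variables (prj1 : forall X Y : C, Mor (bsum X Y) X) (prj2 : forall X Y : C, Mor (bsum X Y) Y).
Hypothesis bsumP : forall X Y : C, is_biproduct (inj1 X Y) (prj1 X Y) (inj2 X Y) (prj2 X Y).

Local Notation zmor := (zmor O_zero).

Definition bpair (X Y W : C) (f : Mor W X) (g : Mor W Y) : Mor W (bsum X Y) :=
  sval (cid (biprod_pair (bsumP X Y) f g)).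
Definition bcopair (X Y W : C) (f : Mor X W) (g : Mor Y W) : Mor (bsum X Y) W :=
  sval (cid (biprod_copair (bsumP X Y) f g)).

Lemma bpair1 X Y W (f : Mor W X) (g : Mor W Y) : prj1 X Y ∘ bpair f g = f.
Proof. exact: (proj1 (proj2_sig (cid (biprod_pair (bsumP X Y) f g)))). Qed.
Lemma bpair2 X Y W (f : Mor W X) (g : Mor W Y) : prj2 X Y ∘ bpair f g = g.
Proof. exact: (proj2 (proj2_sig (cid (biprod_pair (bsumP X Y) f g)))). Qed.
Lemma bcopair1 X Y W (f : Mor X W) (g : Mor Y W) : bcopair f g ∘ inj1 X Y = f.
Proof. exact: (proj1 (proj2_sig (cid (biprod_copair (bsumP X Y) f g)))). Qed.
Lemma bcopair2 X Y W (f : Mor X W) (g : Mor Y W) : bcopair f g ∘ inj2 X Y = g.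
Proof. exact: (proj2 (proj2_sig (cid (biprod_copair (bsumP X Y) f g)))). Qed.

Lemma bpair_eta X Y W (h : Mor W (bsum X Y)) :
  h = bpair (prj1 X Y ∘ h) (prj2 X Y ∘ h).
Proof. by apply: (biprod_proj_inj (bsumP X Y)); rewrite ?bpair1 ?bpair2. Qed.
Lemma bcopair_eta X Y W (h : Mor (bsum X Y) W) :
  h = bcopair (h ∘ inj1 X Y) (h ∘ inj2 X Y).
Proof. by apply: (biprod_inj_inj (bsumP X Y)); rewrite ?bcopair1 ?bcopair2. Qed.

Lemma bpair_inj X Y W (f f' : Mor W X) (g g' : Mor W Y) :
  bpair f g = bpair f' g' -> f = f' /\ g = g'.
Proof.
by move=> e; split; [rewrite -(bpair1 f g) e bpair1 | rewrite -(bpair2 f g) e bpair2].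
Qed.

Lemma bpair_comp X Y W V (f : Mor W X) (g : Mor W Y) (k : Mor V W) :
  bpair f g ∘ k = bpair (f ∘ k) (g ∘ k).
Proof. by rewrite [LHS]bpair_eta !compA bpair1 bpair2. Qed.
Lemma comp_bcopair X Y W V (f : Mor X W) (g : Mor Y W) (k : Mor W V) :
  k ∘ bcopair f g = bcopair (k ∘ f) (k ∘ g).
Proof. by rewrite [LHS]bcopair_eta -!compA bcopair1 bcopair2. Qed.

Lemma bpair_zmorr X Y W (f : Mor W X) : bpair f (zmor W Y) = inj1 X Y ∘ f.
Proof.
apply: (biprod_proj_inj (bsumP X Y)); rewrite ?bpair1 ?bpair2 compA.
  by rewrite (biprod_r1s1 (bsumP X Y)) comp_idl.
by rewrite (biprod_r2s1 O_zero (bsumP X Y)) zmor_compl.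
Qed.
Lemma bpair_zmorl X Y W (g : Mor W Y) : bpair (zmor W X) g = inj2 X Y ∘ g.
Proof.
apply: (biprod_proj_inj (bsumP X Y)); rewrite ?bpair1 ?bpair2 compA.
  by rewrite (biprod_r1s2 O_zero (bsumP X Y)) zmor_compl.
by rewrite (biprod_r2s2 (bsumP X Y)) comp_idl.
Qed.

Definition codiag (Y : C) : Mor (bsum Y Y) Y := bcopair (idm Y) (idm Y).
(* Locked, so that rewriting with [compA] cannot see through a sum. *)
Fact addm_key : unit. Proof. exact: tt. Qed.
Definition addm (X Y : C) (f g : Mor X Y) : Mor X Y :=
  locked_with addm_key (codiag Y ∘ bpair f g).

Lemma addmE X Y (f g : Mor X Y) : addm f g = codiag Y ∘ bpair f g.
Proof. by rewrite /addm unlock. Qed.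

Lemma hom_sumE X Y (f g h : Mor X Y) : hom_sum f g h <-> h = addm f g.
Proof.
split=> [[B [s1 [r1 [s2 [r2 [p [c [B_biprod [e1 [e2 [c1 [c2 ->]]]]]]]]]]]] | ->].
  rewrite addmE; apply: (biprod_sum_unique O_zero B_biprod (bsumP Y Y));
    by rewrite ?e1 ?e2 ?bpair1 ?bpair2 ?bcopair1 ?bcopair2.
exists (bsum Y Y), (inj1 Y Y), (prj1 Y Y), (inj2 Y Y), (prj2 Y Y), (bpair f g), (codiag Y).
by rewrite bpair1 bpair2 bcopair1 bcopair2 addmE.
Qed.

Lemma add0m X Y (f : Mor X Y) : addm (zmor X Y) f = f.
Proof. by rewrite addmE bpair_zmorl compA bcopair2 comp_idl. Qed.
Lemma addm0 X Y (f : Mor X Y) : addm f (zmor X Y) = f.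
Proof. by rewrite addmE bpair_zmorr compA bcopair1 comp_idl. Qed.

(* Both sides factor through [bpair (a ∘ prj1) (b ∘ prj2)], whose composite
   with the codiagonal is [bcopair a b]. *)
Lemma bcopair_bpair X1 X2 W Y (a : Mor X1 Y) (b : Mor X2 Y) (u : Mor W X1) (v : Mor W X2) :
  bcopair a b ∘ bpair u v = addm (a ∘ u) (b ∘ v).
Proof.
pose ab := bpair (a ∘ prj1 X1 X2) (b ∘ prj2 X1 X2).
have ab1 : ab ∘ inj1 X1 X2 = inj1 Y Y ∘ a.
  rewrite /ab bpair_comp -!compA (biprod_r1s1 (bsumP _ _)).
  by rewrite (biprod_r2s1 O_zero (bsumP _ _)) zmor_compr comp_idr bpair_zmorr.
have ab2 : ab ∘ inj2 X1 X2 = inj2 Y Y ∘ b.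
  rewrite /ab bpair_comp -!compA (biprod_r2s2 (bsumP _ _)).
  by rewrite (biprod_r1s2 O_zero (bsumP _ _)) zmor_compr comp_idr bpair_zmorl.
have codiag_ab : codiag Y ∘ ab = bcopair a b.
  apply: (biprod_inj_inj (bsumP X1 X2)); rewrite -compA ?ab1 ?ab2 compA /codiag;
    by rewrite ?bcopair1 ?bcopair2 comp_idl.
by rewrite addmE -codiag_ab -compA bpair_comp -!compA bpair1 bpair2.
Qed.

Lemma addm_compl X Y W (f g : Mor X Y) (k : Mor W X) :
  addm f g ∘ k = addm (f ∘ k) (g ∘ k).
Proof. by rewrite !addmE -compA bpair_comp. Qed.

Lemma addm_compr X Y W (f g : Mor X Y) (k : Mor Y W) :
  k ∘ addm f g = addm (k ∘ f) (k ∘ g).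
Proof. by rewrite addmE compA /codiag comp_bcopair comp_idr bcopair_bpair. Qed.

Lemma addm_interchange X Y (a b c d : Mor X Y) :
  addm (addm a b) (addm c d) = addm (addm a c) (addm b d).
Proof.
have -> : addm (addm a b) (addm c d) = codiag Y ∘ addm (bpair a b) (bpair c d).
  by rewrite addm_compr !addmE.
rewrite [RHS]addmE; congr (_ ∘ _).
by apply: (biprod_proj_inj (bsumP Y Y)); rewrite !addm_compr ?bpair1 ?bpair2.
Qed.

Lemma addmA X Y (a b c : Mor X Y) : addm a (addm b c) = addm (addm a b) c.
Proof. by rewrite -{1}(addm0 a) addm_interchange add0m. Qed.

Lemma addmC X Y (a b : Mor X Y) : addm a b = addm b a.
Proof. by rewrite -{1}(add0m a) -{1}(addm0 b) addm_interchange add0m addm0. Qed.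

End Semiadditive.

Lemma additive_mulrz (U V : zmodType) (phi : U -> V) :
  {morph phi : x y / x + y} -> forall z, {morph phi : x / x *~ z}.
Proof.
move=> phiD z x.
have phi0 : phi 0 = 0 by apply: (@addrI _ (phi 0)); rewrite -phiD !addr0.
exact: (raddfMz (HB.pack phi (GRing.isNmodMorphism.Build U V phi (phi0, phiD)))).
Qed.

Definition invertible (C : Category) (X : C) (t : Mor X X) : Prop :=
  exists w, t ∘ w = idm X /\ w ∘ t = idm X.

Section PreHilbert.
Variables (C : StarCategory) (O : C) (O_zero : is_zero_obj O) (bsum : C -> C -> C).
Variables (inj1 : forall X Y : C, Mor X (bsum X Y)) (inj2 : forall X Y : C, Mor Y (bsum X Y)).
Variables (prj1 : forall X Y : C, Mor (bsum X Y) X) (prj2 : forall X Y : C, Mor (bsum X Y) Y).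
Hypothesis bsumP : forall X Y : C, is_biproduct (inj1 X Y) (prj1 X Y) (inj2 X Y) (prj2 X Y).
Hypotheses (prj1E : forall X Y : C, prj1 X Y = star (inj1 X Y))
           (prj2E : forall X Y : C, prj2 X Y = star (inj2 X Y)).
Hypothesis isometric_kernel : forall (X Y : C) (f : Mor X Y),
  exists (K : C) (m : Mor K X), is_kernel f m /\ star m ∘ m = idm K.
Hypothesis diagonal_kernel : forall X : C,
  exists (Y : C) (f : Mor (bsum X X) Y), is_kernel f (bpair bsumP (idm X) (idm X)).

Local Notation bpair := (bpair bsumP).
Local Notation bcopair := (bcopair bsumP).

HB.instance Definition _ (X Y : C) := gen_eqMixin (Mor X Y).
HB.instance Definition _ (X Y : C) := gen_choiceMixin (Mor X Y).
HB.instance Definition _ (X Y : C) := GRing.isNmodule.Build (Mor X Y)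
  (@addmA _ _ O_zero _ _ _ _ _ bsumP X Y) (@addmC _ _ O_zero _ _ _ _ _ bsumP X Y)
  (@add0m _ _ O_zero _ _ _ _ _ bsumP X Y).

Lemma zmor0 X Y : zmor O_zero X Y = 0.
Proof. by []. Qed.

Lemma hom_sum_addE X Y (f g h : Mor X Y) : hom_sum f g h <-> h = f + g.
Proof. exact: hom_sumE. Qed.

Lemma comp_addl X Y W (f g : Mor X Y) (k : Mor W X) : (f + g) ∘ k = f ∘ k + g ∘ k.
Proof. exact: addm_compl. Qed.
Lemma comp_addr X Y W (f g : Mor X Y) (k : Mor Y W) : k ∘ (f + g) = k ∘ f + k ∘ g.
Proof. exact: addm_compr. Qed.
Lemma comp0l X Y W (k : Mor W X) : (0 : Mor X Y) ∘ k = 0.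
Proof. exact: zmor_compl. Qed.
Lemma comp0r X Y W (k : Mor Y W) : k ∘ (0 : Mor X Y) = 0.
Proof. exact: zmor_compr. Qed.

Lemma bcopair_bpairE X1 X2 W Y (a : Mor X1 Y) (b : Mor X2 Y) (u : Mor W X1) (v : Mor W X2) :
  bcopair a b ∘ bpair u v = a ∘ u + b ∘ v.
Proof. exact: bcopair_bpair. Qed.

Lemma star0 X Y : star (0 : Mor X Y) = 0.
Proof. by rewrite -zmor0 zmorE star_comp comp_through_zero. Qed.

Lemma star_bpair X Y W (f : Mor W X) (g : Mor W Y) :
  star (bpair f g) = bcopair (star f) (star g).
Proof.
have bpair1_star : star (bpair f g) ∘ inj1 X Y = star f.
  by rewrite -[in RHS](bpair1 bsumP f g) prj1E star_comp star_invol.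
have bpair2_star : star (bpair f g) ∘ inj2 X Y = star g.
  by rewrite -[in RHS](bpair2 bsumP f g) prj2E star_comp star_invol.
by rewrite [LHS](bcopair_eta bsumP) bpair1_star bpair2_star.
Qed.

Lemma star_bcopair X Y W (f : Mor X W) (g : Mor Y W) :
  star (bcopair f g) = bpair (star f) (star g).
Proof. by apply: (can_inj (@star_invol _ _ _)); rewrite star_invol star_bpair !star_invol. Qed.

Lemma star_add X Y (f g : Mor X Y) : star (f + g) = star f + star g.
Proof.
rewrite -[f + g]/(addm bsumP f g) addmE.
by rewrite star_comp star_bpair star_bcopair star_id bcopair_bpairE !comp_idr.
Qed.

Lemma kernel_comp0 X Y K (f : Mor X Y) (m : Mor K X) : is_kernel f m -> f ∘ m = 0.
Proof. by case=> /(is_zero_morP O_zero) -> _. Qed.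

Lemma kernel_factor X Y K W (f : Mor X Y) (m : Mor K X) (g : Mor W X) :
  is_kernel f m -> f ∘ g = 0 -> exists h, g = m ∘ h.
Proof.
case=> _ m_univ /(is_zero_morP O_zero) /(m_univ W g) [h [<- _]].
by exists h.
Qed.

(* That is, [d] is a kernel of [star m]: [star f] factors through [m], so
   [star m ∘ h = 0] forces [f ∘ h = 0]. *)
Lemma star_kernel_factor X B Y K (d : Mor X B) (f : Mor B Y) (m : Mor K B) :
  f ∘ d = 0 -> (forall W (h : Mor W B), f ∘ h = 0 -> exists k, h = d ∘ k) ->
  is_kernel (star d) m ->
  forall W (h : Mor W B), star m ∘ h = 0 -> exists k, h = d ∘ k.
Proof.
move=> fd0 d_univ m_ker W h mh0.
have [t f_mt] : exists t, star f = m ∘ t.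
  by apply: (kernel_factor m_ker); rewrite -star_comp fd0 star0.
by apply: d_univ; rewrite -[f]star_invol f_mt star_comp -compA mh0 comp0r.
Qed.

Lemma idm_has_opp X : exists n : Mor X X, idm X + n = 0.
Proof.
pose D := bpair (idm X) (idm X).
have [Y [g g_ker]] := diagonal_kernel X.
have [K [m [m_ker m_iso]]] := isometric_kernel (star D).
pose p := prj1 X X ∘ m; pose q := prj2 X X ∘ m.
have m_pq : m = bpair p q := bpair_eta bsumP m; clearbody p q.
have star_D : star D = bcopair (idm X) (idm X) by rewrite star_bpair star_id.
have pq0 : p + q = 0.
  by rewrite -(kernel_comp0 m_ker) star_D m_pq bcopair_bpairE !comp_idl.
have norm_m : star p ∘ p + star q ∘ q = idm K.
  by rewrite -m_iso m_pq star_bpair bcopair_bpairE.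
have pp_qq : star p ∘ p = star q ∘ q.
  have e1 : star p ∘ p + star q ∘ p = 0 by rewrite -comp_addl -star_add pq0 star0 comp0l.
  have e2 : star q ∘ p + star q ∘ q = 0 by rewrite -comp_addr pq0 comp0r.
  by rewrite -[LHS]addr0 -e2 addrA e1 add0r.
pose e := (p + p) ∘ star p.
have pe : star p ∘ e = star p.
  by rewrite /e compA comp_addr {2}pp_qq norm_m comp_idl.
have [k ek] : exists k, bpair e (idm X) = D ∘ k.
  apply: (star_kernel_factor (kernel_comp0 g_ker) _ m_ker).
    by move=> W h /(kernel_factor g_ker).
  by rewrite m_pq star_bpair bcopair_bpairE pe comp_idr -star_add pq0 star0.
have e1 : e = idm X.
  by move: ek; rewrite /D bpair_comp !comp_idl => /bpair_inj [-> <-].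
exists ((q + q) ∘ star p).
by rewrite -{1}e1 /e -comp_addl addrACA pq0 addr0 comp0l.
Qed.

Definition oppm X Y (f : Mor X Y) : Mor X Y := f ∘ sval (cid (idm_has_opp X)).

Lemma addNm X Y : left_inverse (0 : Mor X Y) (@oppm X Y) +%R.
Proof.
move=> f; rewrite /oppm addrC -[f in f + _]comp_idr -comp_addr.
by rewrite (proj2_sig (cid (idm_has_opp X))) comp0r.
Qed.

HB.instance Definition _ (X Y : C) := GRing.Nmodule_isZmodule.Build (Mor X Y) (@addNm X Y).

Lemma comp_mulrzl X Y W (f : Mor X Y) (k : Mor W X) z : (f *~ z) ∘ k = (f ∘ k) *~ z.
Proof. by apply: (additive_mulrz (phi := fun f : Mor X Y => f ∘ k)) => g h; exact: comp_addl. Qed.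
Lemma comp_mulrzr X Y W (f : Mor X Y) (k : Mor Y W) z : k ∘ (f *~ z) = (k ∘ f) *~ z.
Proof. by apply: (additive_mulrz (phi := fun f : Mor X Y => k ∘ f)) => g h; exact: comp_addr. Qed.
Lemma star_mulrz X Y (f : Mor X Y) z : star (f *~ z) = star f *~ z.
Proof. by apply: (additive_mulrz (phi := fun f : Mor X Y => star f)) => g h; exact: star_add. Qed.

Lemma comp_oppl X Y W (f : Mor X Y) (k : Mor W X) : (- f) ∘ k = - (f ∘ k).
Proof. by rewrite -mulrN1z comp_mulrzl mulrN1z. Qed.
Lemma comp_oppr X Y W (f : Mor X Y) (k : Mor Y W) : k ∘ (- f) = - (k ∘ f).
Proof. by rewrite -mulrN1z comp_mulrzr mulrN1z. Qed.
Lemma star_opp X Y (f : Mor X Y) : star (- f) = - star f.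
Proof. by rewrite -mulrN1z star_mulrz mulrN1z. Qed.

(* The graph [g] of [a] is a kernel of [bcopair a (-1)].  Writing an isometric
   kernel of [star g] as [bpair p q] gives [p = - star a ∘ q], hence
   [star q ∘ T ∘ q = 1] for [T = 1 + a ∘ star a]; factoring [bpair 0 (T ∘ q ∘ star q - 1)] through [g]
   then forces [T ∘ q ∘ star q = 1]. *)
Lemma invertible_idm_add_mul_star X Z (a : Mor X Z) : invertible (idm Z + a ∘ star a).
Proof.
pose g := bpair (idm X) a; pose f := bcopair a (- idm Z).
have fg0 : f ∘ g = 0 by rewrite bcopair_bpairE comp_idr comp_oppl comp_idl subrr.
have g_univ W (h : Mor W (bsum X Z)) : f ∘ h = 0 -> exists k, h = g ∘ k.
  rewrite {1}(bpair_eta bsumP h) bcopair_bpairE comp_oppl comp_idl => /subr0_eq ah.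
  by exists (prj1 X Z ∘ h); rewrite bpair_comp comp_idl ah -bpair_eta.
have [K [m [m_ker m_iso]]] := isometric_kernel (star g).
pose p := prj1 X Z ∘ m; pose q := prj2 X Z ∘ m.
have m_pq : m = bpair p q := bpair_eta bsumP m; clearbody p q.
have p_q : p = - (star a ∘ q).
  apply/eqP; rewrite -addr_eq0; apply/eqP.
  by rewrite -(kernel_comp0 m_ker) star_bpair star_id m_pq bcopair_bpairE comp_idl.
set T := idm Z + a ∘ star a.
have qTq : star q ∘ T ∘ q = idm K.
  rewrite -m_iso m_pq star_bpair bcopair_bpairE p_q star_opp comp_oppl comp_oppr opprK.
  by rewrite star_comp star_invol /T comp_addr comp_addl comp_idr !compA addrC.
have [k gk] : exists k, bpair 0 (T ∘ q ∘ star q - idm Z) = g ∘ k.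
  apply: (star_kernel_factor fg0 g_univ m_ker).
  rewrite m_pq star_bpair bcopair_bpairE comp0r add0r comp_addr comp_oppr comp_idr.
  by rewrite !compA qTq comp_idl subrr.
have Tqq : T ∘ q ∘ star q = idm Z.
  move: gk; rewrite bpair_comp comp_idl => /bpair_inj [<-].
  by rewrite comp0r => /subr0_eq.
have T_selfadjoint : star T = T by rewrite star_add star_id star_comp star_invol.
exists (q ∘ star q); split; first by rewrite compA.
by rewrite -(star_id Z) -Tqq !star_comp star_invol T_selfadjoint compA.
Qed.

Lemma sum_of_squares_natmul n X : exists Z (a : Mor X Z), star a ∘ a = idm X *+ n.
Proof.
elim: n => [|n [Z [a a_n]]]; first by exists X, 0; rewrite comp0r.
exists (bsum Z X), (bpair a (idm X)).
by rewrite star_bpair bcopair_bpairE star_id comp_idl a_n mulrS addrC.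
Qed.

Lemma invertible_natmul n X : invertible (idm X *+ n.+1).
Proof.
have [Z [a a_n]] := sum_of_squares_natmul n X.
by rewrite mulrS -a_n -[a in _ ∘ a]star_invol; exact: invertible_idm_add_mul_star.
Qed.

Lemma invertible_mulrz X (d : int) : 0 < d -> invertible (idm X *~ d).
Proof. by case: d => [[|n]|] // _; rewrite -pmulrn; exact: invertible_natmul. Qed.

Lemma mulrz_comp_idm X Y (f : Mor X Y) z : f *~ z = f ∘ (idm X *~ z).
Proof. by rewrite comp_mulrzr comp_idr. Qed.

Lemma mulrz_pos_inj X Y (d : int) (g g' : Mor X Y) : 0 < d -> g *~ d = g' *~ d -> g = g'.
Proof.
move=> d_gt0 e; have [w [dw _]] := invertible_mulrz X d_gt0.
by rewrite -(comp_idr g) -(comp_idr g') -dw !compA -!mulrz_comp_idm e.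
Qed.

Definition inv_denq X (q : rat) : Mor X X := sval (cid (invertible_mulrz X (denq_gt0 q))).

Definition scale : QAction C := fun X Y q f => (f *~ numq q) ∘ inv_denq X q.

Lemma scale_denq X Y q (f : Mor X Y) : scale q f *~ denq q = f *~ numq q.
Proof.
have [_ inv_d] := proj2_sig (cid (invertible_mulrz X (denq_gt0 q))).
by rewrite mulrz_comp_idm -compA inv_d comp_idr.
Qed.

Lemma eq_scale_mulrz X Y q (d z : int) (f g : Mor X Y) :
  0 < d -> q * d%:~R = z%:~R -> g *~ d = f *~ z -> g = scale q f.
Proof.
move=> d_gt0 qdz gdz.
apply: (@mulrz_pos_inj _ _ (d * denq q)); first by rewrite mulr_gt0 ?denq_gt0.
rewrite mulrzA gdz (mulrC d) [scale q f *~ _]mulrzA scale_denq -!mulrzA.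
congr (_ *~ _); apply/eqP; rewrite -(eqr_int rat) !intrM numqE -qdz.
by rewrite mulrAC.
Qed.

Lemma scale_morph X Y X' Y' (phi : Mor X Y -> Mor X' Y') :
  (forall z f, phi (f *~ z) = phi f *~ z) -> forall q f, phi (scale q f) = scale q (phi f).
Proof.
move=> phi_z q f; apply: (eq_scale_mulrz (z := numq q) (denq_gt0 q)); first by rewrite numqE.
by rewrite -phi_z (scale_denq q f) phi_z.
Qed.

Lemma scale1 X Y (f : Mor X Y) : scale 1 f = f.
Proof. by symmetry; apply: (@eq_scale_mulrz _ _ _ 1 1); rewrite ?mul1r. Qed.

Lemma scaleDl X Y a b (f : Mor X Y) : scale (a + b) f = scale a f + scale b f.
Proof.
symmetry; apply: (@eq_scale_mulrz _ _ _ (denq a * denq b) (numq a * denq b + numq b * denq a)).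
- by rewrite mulr_gt0 ?denq_gt0.
- by rewrite intrD !intrM mulrDl mulrA -numqE [(denq a)%:~R * _]mulrC mulrA -numqE.
rewrite mulrzDl (mulrzA (scale a f)) (scale_denq a f) (mulrC (denq a)).
by rewrite (mulrzA (scale b f)) (scale_denq b f) -!mulrzA -mulrzDr.
Qed.

Lemma scaleA X Y a b (f : Mor X Y) : scale (a * b) f = scale a (scale b f).
Proof.
symmetry; apply: (@eq_scale_mulrz _ _ _ (denq a * denq b) (numq a * numq b)).
- by rewrite mulr_gt0 ?denq_gt0.
- by rewrite !intrM mulrACA -!numqE.
rewrite (mulrzA (scale a _)) (scale_denq a) -mulrzA (mulrC (numq a)).
by rewrite (mulrzA (scale b f)) (scale_denq b f) -mulrzA (mulrC (numq b)).
Qed.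

Lemma scaleDr X Y a (f g : Mor X Y) : scale a (f + g) = scale a f + scale a g.
Proof.
symmetry; apply: (eq_scale_mulrz (z := numq a) (denq_gt0 a)); first by rewrite numqE.
by rewrite !mulrzDl !scale_denq.
Qed.

Lemma scale_compl X Y Z a (g : Mor Y Z) (f : Mor X Y) : scale a (g ∘ f) = scale a g ∘ f.
Proof.
by symmetry; apply: (scale_morph (phi := fun g : Mor Y Z => g ∘ f)) => z h; exact: comp_mulrzl.
Qed.

Lemma scale_compr X Y Z a (g : Mor Y Z) (f : Mor X Y) : scale a (g ∘ f) = g ∘ scale a f.
Proof.
by symmetry; apply: (scale_morph (phi := fun f : Mor X Y => g ∘ f)) => z h; exact: comp_mulrzr.
Qed.

Lemma scale_Qlinear : is_Qlinear scale.
Proof.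
split.
- by split=> [X Y f | X Y a b f]; [exact: scale1 | exact: scaleA].
- by move=> X Y a b f; apply/hom_sum_addE; rewrite scaleDl.
- by move=> X Y a f g h /hom_sum_addE ->; apply/hom_sum_addE; rewrite scaleDr.
- split=> [X Y Z g f f' h | X Y Z g g' h f] /hom_sum_addE ->; apply/hom_sum_addE.
    exact: comp_addr.
  exact: comp_addl.
by move=> X Y Z a g f; split; [exact: scale_compl | exact: scale_compr].
Qed.

Lemma Qlinear_scale_unique (sc : QAction C) : is_Qlinear sc ->
  forall X Y q (f : Mor X Y), sc X Y q f = scale q f.
Proof.
case=> [[sc1 scA] scDl _ _ _] X Y q f.
have sc_int (g : Mor X Y) (z : int) : sc X Y z%:~R g = g *~ z.
  rewrite -[in RHS](sc1 _ _ g) -(additive_mulrz (phi := fun r => sc X Y r g)) //.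
  by move=> a b; apply/hom_sum_addE; exact: scDl.
apply: (eq_scale_mulrz (z := numq q) (denq_gt0 q)); first by rewrite numqE.
by rewrite -sc_int -scA mulrC -numqE sc_int.
Qed.

Lemma star_scale X Y q (f : Mor X Y) : star (scale q f) = scale q (star f).
Proof. by apply: (scale_morph (phi := fun f : Mor X Y => star f)) => z g; exact: star_mulrz. Qed.

End PreHilbert.

Lemma choose_orthonormal_biproducts (C : StarCategory) :
  (forall X Y : C, exists (B : C) (s1 : Mor X B) (s2 : Mor Y B),
     is_biproduct s1 (star s1) s2 (star s2)) ->
  exists (bsum : C -> C -> C) (inj1 : forall X Y : C, Mor X (bsum X Y))
         (inj2 : forall X Y : C, Mor Y (bsum X Y)),
    forall X Y : C, is_biproduct (inj1 X Y) (star (inj1 X Y)) (inj2 X Y) (star (inj2 X Y)).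
Proof.
move=> biprod.
pose s1s2 X Y := proj2_sig (cid (biprod X Y)).
pose s2 X Y := proj2_sig (cid (s1s2 X Y)).
by exists (fun X Y => sval (cid (biprod X Y))), (fun X Y => sval (cid (s1s2 X Y))),
  (fun X Y => sval (cid (s2 X Y))) => X Y; exact: proj2_sig (cid (s2 X Y)).
Qed.

Theorem corollary6p7 (C : StarCategory) (HC : is_preHilbert C) :
  exists sc : QAction C,
    [/\ is_Qlinear sc,
        (forall sc' : QAction C, is_Qlinear sc' ->
           forall (X Y : C) (q : rat) (f : Mor X Y), sc' X Y q f = sc X Y q f) &
        (forall (X Y : C) (q : rat) (f : Mor X Y),
           star (sc X Y q f) = sc Y X q (star f))].
Proof.
case: HC => [[O O_zero] /choose_orthonormal_biproducts [bsum [inj1 [inj2 bsumP]]]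
  isometric_kernel diagonal_is_kernel].
have diagonal_kernel X : exists Y (f : Mor (bsum X X) Y),
    is_kernel f (bpair bsumP (idm X) (idm X)).
  by apply: (diagonal_is_kernel _ _ _ _ (bsumP X X)); rewrite ?bpair1 ?bpair2.
exists (scale O_zero (fun _ _ => erefl) (fun _ _ => erefl) isometric_kernel diagonal_kernel).
split; [exact: scale_Qlinear | exact: Qlinear_scale_unique | exact: star_scale].
Qed.
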